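(* Let $\mathcal Z$ be a finite zero-set and $a,b\in\{1,2,\dots\}\cup\{\infty\}$. If $A'$ spans for the zero-set $\mathcal Z\cap R_{a,b}$, then there exists $A\supseteq A'$ which spans for $\mathcal Z$ and satisfies $|A|=|A'|+|\mathcal Z\setminus R_{a,b}|$; moreover, if $A'$ is thin, $A$ can be chosen thin. Consequently $$\gamma(\mathcal Z\cap R_{a,b})\ge\gamma(\mathcal Z)-|\mathcal Z\setminus R_{a,b}|,\qquad \gamma_{\rm thin}(\mathcal Z\cap R_{a,b})\ge\gamma_{\rm thin}(\mathcal Z)-|\mathcal Z\setminus R_{a,b}|.$$
   Context: $\mathbb Z_+=\{0,1,2,\dots\}$, $R_{a,b}=([0,a-1]\times[0,b-1])\cap\mathbb Z_+^2$, where $[0,\infty-1]$ means $[0,\infty)$. A zero-set is a union of rectangles $R_{a,b}$. $\mathrm{row}(x,A),\mathrm{col}(x,A)$ count the points of $A$ on the horizontal/vertical line through $x$; for a zero-set $\mathcal Z$, $\mathcal T(A)=A\cup\{x\notin A:(\mathrm{row}(x,A),\mathrm{col}(x,A))\notin\mathcal Z\}$; $A$ spans for $\mathcal Z$ if $\bigcup_t\mathcal T^t(A)=\mathbb Z_+^2$; $\gamma(\mathcal Z)$ is the minimal size of a finite spanning set. A set is thin if each of its points has no other point of the set on its horizontal line or no other point of the set on its vertical line; $\gamma_{\rm thin}(\mathcal Z)$ is the minimal size of a thin spanning set. *)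

(* Points of Z_+^2 are pairs (nat * nat); sets are Prop predicates;
   finite sets are duplicate-free lists. *)
From Stdlib Require Import List Arith.
Import ListNotations.

Definition pt := (nat * nat)%type.
Definition pset := pt -> Prop.

(* Extended positive naturals {1,2,...} ∪ {∞}: [Some n] is n (required n >= 1), [None] is ∞. *)
Definition extpos := option nat.
Definition valid_ext (a : extpos) : Prop :=
  match a with Some n => 1 <= n | None => True end.

(* k <= a - 1, i.e. k < a, with ∞ - 1 = ∞ *)
Definition below (k : nat) (a : extpos) : Prop :=
  match a with Some n => k < n | None => True end.

Definition rect (a b : extpos) : pset := fun x => below (fst x) a /\ below (snd x) b.

Definition is_zero_set (Z : pset) : Prop :=
  exists (I : Type) (ab : I -> extpos * extpos),
    (forall i, valid_ext (fst (ab i)) /\ valid_ext (snd (ab i))) /\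
    (forall x, Z x <-> exists i, rect (fst (ab i)) (snd (ab i)) x).

Definition card_is (P : pset) (n : nat) : Prop :=
  exists l : list pt, NoDup l /\ (forall x, In x l <-> P x) /\ length l = n.

Definition finite_set (P : pset) : Prop := exists n, card_is P n.

Definition setI (P Q : pset) : pset := fun x => P x /\ Q x.
Definition setD (P Q : pset) : pset := fun x => P x /\ ~ Q x.

(* row(x,A) = r : the horizontal line through x = (i,j), i.e. {(k,j)},
   contains exactly r points of A (finitely many). *)
Definition row_is (A : pset) (x : pt) (r : nat) : Prop :=
  exists l : list nat, NoDup l /\ (forall k, In k l <-> A (k, snd x)) /\ length l = r.
(* col(x,A) = c : the vertical line through x = (i,j), i.e. {(i,k)}. *)
Definition col_is (A : pset) (x : pt) (c : nat) : Prop :=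
  exists l : list nat, NoDup l /\ (forall k, In k l <-> A (fst x, k)) /\ length l = c.

(* (row(x,A), col(x,A)) ∈ Z; if a count is infinite the pair is not in Z ⊆ Z_+^2. *)
Definition counts_in (Z : pset) (A : pset) (x : pt) : Prop :=
  exists r c, row_is A x r /\ col_is A x c /\ Z (r, c).

Definition Tstep (Z : pset) (A : pset) : pset :=
  fun x => A x \/ (~ A x /\ ~ counts_in Z A x).

Fixpoint Titer (Z : pset) (t : nat) (A : pset) : pset :=
  match t with
  | O => A
  | S t' => Tstep Z (Titer Z t' A)
  end.

Definition spans (Z : pset) (A : pset) : Prop := forall x, exists t, Titer Z t A x.

Definition lset (l : list pt) : pset := fun x => In x l.

Definition thin (A : pset) : Prop :=
  forall x, A x ->
    (forall y, A y -> snd y = snd x -> y = x) \/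
    (forall y, A y -> fst y = fst x -> y = x).

Definition is_gamma (Z : pset) (g : nat) : Prop :=
  (exists A, card_is A g /\ spans Z A) /\
  (forall A n, card_is A n -> spans Z A -> g <= n).

Definition is_gamma_thin (Z : pset) (g : nat) : Prop :=
  (exists A, card_is A g /\ thin A /\ spans Z A) /\
  (forall A n, card_is A n -> thin A -> spans Z A -> g <= n).

From Stdlib Require Import List Arith Lia Classical ClassicalEpsilon FinFun.
Import ListNotations.

(* Since Z is finite and down-closed, Z ∩ R_{a,b} grows into Z through boxes Z ∩ R_{p,q}, one row
   or one column at a time; columns reduce to rows by transposing the plane.  Growing the box by row
   p adds the zeros (p, 0), ..., (p, m-1), and a spanning set survives this step if we add m points
   on a fresh column, in fresh rows.  These points are alone on their rows, so
   thinness is kept, and over all steps exactly |Z \ R_{a,b}| points are added. *)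

(* [card_is P], [row_is A x] and [col_is A x] all unfold to [has_card]. *)
Definition has_card {T : Type} (P : T -> Prop) (n : nat) : Prop :=
  exists l : list T, NoDup l /\ (forall x, In x l <-> P x) /\ length l = n.

Lemma nat_max_exists (P : nat -> Prop) K :
  (forall n, P n -> n < K) -> (exists n, P n) -> exists n, P n /\ forall m, P m -> m <= n.
Proof.
  revert P. induction K as [|K IH]; intros P Hbound Hex.
  - destruct Hex as [n Hn]. apply Hbound in Hn. lia.
  - destruct (classic (P K)) as [HK|HK].
    + exists K. split; [exact HK|]. intros m Hm. apply Hbound in Hm. lia.
    + apply IH; [|exact Hex]. intros n Hn.
      assert (n <> K) by (intros ->; contradiction). apply Hbound in Hn. lia.
Qed.

Lemma nat_down_closed_segment (P : nat -> Prop) K :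
  (forall n n', P n -> n' <= n -> P n') -> (forall n, P n -> n < K) ->
  exists m, forall n, P n <-> n < m.
Proof.
  intros Hdown Hbound. destruct (classic (exists n, P n)) as [Hex|Hnone].
  - destruct (nat_max_exists P K Hbound Hex) as (m & Hm & Hmax).
    exists (S m). intros n. split; [intros Hn; apply Hmax in Hn; lia|].
    intros Hn. apply (Hdown m); [exact Hm|lia].
  - exists 0. intros n. split; [intros Hn; exfalso; eauto|lia].
Qed.

Section Cardinality.
Context {T : Type}.
Implicit Types P Q : T -> Prop.

Lemma has_card_ext P Q n : (forall x, P x <-> Q x) -> has_card P n -> has_card Q n.
Proof.
  intros HPQ [l (Hl & HlP & <-)]. exists l. split; [exact Hl|split; [|reflexivity]].
  intros x. rewrite HlP. apply HPQ.
Qed.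

Lemma has_card_le P Q m n :
  (forall x, P x -> Q x) -> has_card P m -> has_card Q n -> m <= n.
Proof.
  intros HPQ [l (Hl & HlP & <-)] [l' (_ & Hl'Q & <-)].
  apply NoDup_incl_length; [exact Hl|]. intros x Hx. apply Hl'Q, HPQ, HlP, Hx.
Qed.

Lemma has_card_unique {P m n} : has_card P m -> has_card P n -> m = n.
Proof. intros Hm Hn. apply Nat.le_antisymm; eapply has_card_le; eauto. Qed.

Lemma has_card_sub P Q n :
  (forall x, P x -> Q x) -> has_card Q n -> exists m, has_card P m /\ m <= n.
Proof.
  intros HPQ [l (Hl & HlQ & <-)].
  set (l' := filter (fun x => if excluded_middle_informative (P x) then true else false) l).
  exists (length l'). split; [|apply filter_length_le].
  exists l'. split; [apply NoDup_filter, Hl|split; [|reflexivity]].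
  intros x. unfold l'. rewrite filter_In.
  destruct (excluded_middle_informative (P x)) as [Hx|Hx].
  - split; [tauto|]. intros _. split; [apply HlQ, HPQ, Hx|reflexivity].
  - split; [intros [_ H]; discriminate|tauto].
Qed.

Lemma has_card_incl_eq P Q n :
  (forall x, P x -> Q x) -> has_card P n -> has_card Q n -> forall x, Q x -> P x.
Proof.
  intros HPQ [l (Hl & HlP & Hlen)] [l' (_ & Hl'Q & Hlen')] x Hx.
  apply HlP. apply (NoDup_length_incl (l' := l') Hl); [lia| |apply Hl'Q, Hx].
  intros y Hy. apply Hl'Q, HPQ, HlP, Hy.
Qed.

Lemma has_card_union P Q m n :
  (forall x, P x -> ~ Q x) -> has_card P m -> has_card Q n ->
  has_card (fun x => P x \/ Q x) (m + n).
Proof.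
  intros HPQ [l (Hl & HlP & <-)] [l' (Hl' & Hl'Q & <-)].
  exists (l ++ l'). split; [|split].
  - apply NoDup_app; [exact Hl|exact Hl'|]. intros x Hx Hx'. apply (HPQ x); [apply HlP|apply Hl'Q]; assumption.
  - intros x. rewrite in_app_iff, HlP, Hl'Q. reflexivity.
  - apply length_app.
Qed.

Lemma has_card_image {U : Type} (f : T -> U) P n :
  Injective f -> has_card P n -> has_card (fun y => exists x, P x /\ f x = y) n.
Proof.
  intros Hf [l (Hl & HlP & <-)]. exists (map f l).
  split; [apply Injective_map_NoDup; assumption|split; [|apply length_map]].
  intros y. rewrite in_map_iff. split; intros [x [H1 H2]]; exists x; split; try apply HlP; assumption.
Qed.

Lemma has_card_increasing_union (S : nat -> T -> Prop) K :
  (forall t t' x, t <= t' -> S t x -> S t' x) ->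
  (forall t, exists n, has_card (S t) n /\ n < K) ->
  exists t0 n, has_card (fun x => exists t, S t x) n /\ forall t, t0 <= t -> has_card (S t) n.
Proof.
  intros Hmono Hbound.
  destruct (nat_max_exists (fun n => exists t, has_card (S t) n) K) as (n & (t0 & Ht0) & Hmax).
  - intros n [t Ht]. destruct (Hbound t) as (n' & Hn' & Hlt).
    rewrite (has_card_unique Ht Hn'). exact Hlt.
  - destruct (Hbound 0) as (n & Hn & _). eauto.
  - assert (Hstable : forall t, t0 <= t -> has_card (S t) n).
    { intros t Ht. destruct (Hbound t) as (n' & Hn' & _).
      assert (n <= n') by (eapply has_card_le; [|exact Ht0|exact Hn']; intros x; apply Hmono, Ht).
      assert (n' <= n) by (apply Hmax; eauto).
      replace n with n' by lia. exact Hn'. }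
    exists t0, n. split; [|exact Hstable].
    apply (has_card_ext (S t0)); [|exact Ht0].
    intros x. split; [eauto|]. intros [t Hx].
    apply (has_card_incl_eq (S t0) (S (max t0 t)) n);
      [intros y; apply Hmono; lia|exact Ht0|apply Hstable; lia|].
    apply (Hmono t); [lia|exact Hx].
Qed.

End Cardinality.

Lemma has_card_seq N m : has_card (fun k => N <= k < N + m) m.
Proof. exists (seq N m). split; [apply seq_NoDup|split; [intros k; apply in_seq|apply length_seq]]. Qed.

Definition down_closed (Y : pset) : Prop :=
  forall r c r' c', Y (r, c) -> r' <= r -> c' <= c -> Y (r', c').

Definition bounded_by (Y : pset) (K : nat) : Prop :=
  forall r c, Y (r, c) -> r < K /\ c < K.

Lemma zero_set_down_closed Z : is_zero_set Z -> down_closed Z.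
Proof.
  intros (Idx & ab & _ & HZ) r c r' c' Hrc Hr Hc.
  apply HZ in Hrc. destruct Hrc as [i [Hri Hci]]. apply HZ. exists i. split; simpl in *.
  - destruct (fst (ab i)); simpl in *; [lia|exact I].
  - destruct (snd (ab i)); simpl in *; [lia|exact I].
Qed.

Lemma list_coord_bound (l : list pt) : exists N, forall x, In x l -> fst x < N /\ snd x < N.
Proof.
  induction l as [|[i j] l [N HN]]; [exists 0; intros x []|].
  exists (S (max (max i j) N)). intros x [<-|Hx]; simpl; [lia|]. apply HN in Hx. lia.
Qed.

Lemma finite_set_bounded Z : finite_set Z -> exists K, bounded_by Z K.
Proof.
  intros (n & l & _ & Hl & _). destruct (list_coord_bound l) as [K HK].
  exists K. intros r c Hrc. apply (HK (r, c)), Hl, Hrc.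
Qed.

Definition transp (x : pt) : pt := (snd x, fst x).

Lemma transp_involutive x : transp (transp x) = x.
Proof. destruct x. reflexivity. Qed.

Lemma transp_injective : Injective transp.
Proof. intros x y Hxy. rewrite <- (transp_involutive x), Hxy. apply transp_involutive. Qed.

Lemma in_map_transp l x : In x (map transp l) <-> In (transp x) l.
Proof.
  rewrite in_map_iff. split; [intros [y [<- Hy]]; rewrite transp_involutive; exact Hy|].
  intros Hx. exists (transp x). split; [apply transp_involutive|exact Hx].
Qed.

Lemma counts_in_equiv (Z Z' S S' : pset) x :
  (forall y, Z y <-> Z' y) -> (forall y, S y <-> S' y) -> counts_in Z S x -> counts_in Z' S' x.
Proof.
  intros HZ HS (r & c & Hr & Hc & Hrc). exists r, c.
  split; [|split; [|apply HZ, Hrc]].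
  - apply (has_card_ext _ _ _ (fun k => HS (k, snd x)) Hr).
  - apply (has_card_ext _ _ _ (fun k => HS (fst x, k)) Hc).
Qed.

Lemma Titer_equiv (Z Z' A A' : pset) :
  (forall y, Z y <-> Z' y) -> (forall y, A y <-> A' y) ->
  forall t y, Titer Z t A y <-> Titer Z' t A' y.
Proof.
  intros HZ HA t. induction t as [|t IH]; intros y; [apply HA|]. simpl. unfold Tstep.
  assert (Hcounts : counts_in Z (Titer Z t A) y <-> counts_in Z' (Titer Z' t A') y).
  { split; apply counts_in_equiv; firstorder. }
  rewrite IH, Hcounts. reflexivity.
Qed.

Lemma spans_equiv (Z Z' A A' : pset) :
  (forall y, Z y <-> Z' y) -> (forall y, A y <-> A' y) -> spans Z A -> spans Z' A'.
Proof.
  intros HZ HA Hspan x. destruct (Hspan x) as [t Ht]. exists t. apply (Titer_equiv Z Z' A A'); assumption.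
Qed.

Lemma Titer_mono Z A t t' y : t <= t' -> Titer Z t A y -> Titer Z t' A y.
Proof. induction 1; [trivial|]. intros Hy. left. auto. Qed.

Lemma counts_in_transp Z S x :
  counts_in Z S x <-> counts_in (fun y => Z (transp y)) (fun y => S (transp y)) (transp x).
Proof. destruct x as [i j]. split; intros (r & c & Hr & Hc & Hrc); exists c, r; auto. Qed.

Lemma Titer_transp Z A t x :
  Titer Z t A x <-> Titer (fun y => Z (transp y)) t (fun y => A (transp y)) (transp x).
Proof.
  revert x. induction t as [|t IH]; intros x; simpl; [rewrite transp_involutive; reflexivity|].
  unfold Tstep. rewrite IH, counts_in_transp.
  assert (Hline : forall y, Titer Z t A (transp y) <->
                       Titer (fun y => Z (transp y)) t (fun y => A (transp y)) y).
  { intros y. rewrite IH, transp_involutive. reflexivity. }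
  split; intros [H|[H1 H2]]; auto; right; split; auto; intros Hc; apply H2;
    eapply counts_in_equiv; try exact Hc; firstorder.
Qed.

Lemma counts_in_same_lines Z (S : pset) x y :
  (forall k, S (k, snd x) <-> S (k, snd y)) -> (forall k, S (fst x, k) <-> S (fst y, k)) ->
  counts_in Z S x -> counts_in Z S y.
Proof.
  intros Hrow Hcol (r & c & Hr & Hc & Hrc). exists r, c.
  split; [|split; [|exact Hrc]].
  - exact (has_card_ext _ _ _ Hrow Hr).
  - exact (has_card_ext _ _ _ Hcol Hc).
Qed.

Lemma Titer_fresh_columns Z A N :
  (forall x, A x -> fst x < N) ->
  forall t i i' j, N <= i -> N <= i' -> Titer Z t A (i, j) -> Titer Z t A (i', j).
Proof.
  intros HA t. induction t as [|t IH]; intros i i' j Hi Hi' Hij.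
  - apply HA in Hij. simpl in Hij. lia.
  - destruct Hij as [Hij|[Hnij Hcount]]; [left; eapply IH; eauto|].
    right. split; [intros H; apply Hnij; eapply IH; eauto|].
    intros H. apply Hcount. eapply counts_in_same_lines; [| |exact H]; intros k; simpl;
      [reflexivity|split; apply IH; assumption].
Qed.

Definition span_closure (Z A : pset) : pset := fun x => exists t, Titer Z t A x.

Lemma span_closure_closed Z A K :
  bounded_by Z K -> forall x, ~ span_closure Z A x -> counts_in Z (span_closure Z A) x.
Proof.
  intros HK x Hx.
  assert (Hcount : forall t, counts_in Z (Titer Z t A) x).
  { intros t. apply NNPP. intros Hn. apply Hx. exists (S t). right. split; [|exact Hn].
    intros H. apply Hx. exists t. exact H. }
  destruct (has_card_increasing_union (fun t k => Titer Z t A (k, snd x)) K)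
    as (t1 & r & Hr & Hr_stable).
  { intros t t' k Htt'. apply Titer_mono, Htt'. }
  { intros t. destruct (Hcount t) as (rt & ct & Hrt & _ & Hrc). exists rt. split; [exact Hrt|apply (HK _ _ Hrc)]. }
  destruct (has_card_increasing_union (fun t k => Titer Z t A (fst x, k)) K)
    as (t2 & c & Hc & Hc_stable).
  { intros t t' k Htt'. apply Titer_mono, Htt'. }
  { intros t. destruct (Hcount t) as (rt & ct & _ & Hct & Hrc). exists ct. split; [exact Hct|apply (HK _ _ Hrc)]. }
  destruct (Hcount (max t1 t2)) as (r' & c' & Hr' & Hc' & Hrc').
  rewrite <- (has_card_unique (Hr_stable (max t1 t2) ltac:(lia)) Hr') in Hrc'.
  rewrite <- (has_card_unique (Hc_stable (max t1 t2) ltac:(lia)) Hc') in Hrc'.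
  exists r, c. split; [exact Hr|split; [exact Hc|exact Hrc']].
Qed.

Definition column_segment (N m : nat) : pset := fun x => fst x = N /\ N <= snd x < N + m.

(* A point that [Y1] would add but [Y2] would not has row count [a] both before and after, so its
   row contains the point of the fresh column [N] (whose column count is at least [m]); but a row
   reaching the fresh columns is infinite. *)
Section FreshColumn.
Variables (Y1 Y2 A : pset) (K a m N : nat).
Hypotheses (HY2_down : down_closed Y2) (HY2_bounded : bounded_by Y2 K)
  (Hnew_in_row : forall r c, Y2 (r, c) -> ~ Y1 (r, c) -> a <= r)
  (Hrow_le : forall r c, Y2 (r, c) -> r <= a)
  (Hrow_a : forall c, Y2 (a, c) -> c < m)
  (HA_fresh : forall x, A x -> fst x < N).

Let C : pset := span_closure Y2 (fun x => A x \/ column_segment N m x).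

Lemma fresh_column_in_closure j : has_card (fun k => C (k, j)) a -> C (N, j).
Proof.
  intros Hrow. apply NNPP. intros HnC.
  destruct (span_closure_closed _ _ _ HY2_bounded _ HnC) as (r & c & Hr & Hc & Hrc).
  rewrite (has_card_unique Hr Hrow) in Hrc.
  assert (m <= c).
  { eapply has_card_le; [|apply (has_card_seq N)|exact Hc].
    intros k Hk. exists 0. right. split; [reflexivity|exact Hk]. }
  apply Hrow_a in Hrc. lia.
Qed.

Lemma Titer_fresh_row_infinite t j n :
  Titer Y1 t A (N, j) -> ~ has_card (fun k => Titer Y1 t A (k, j)) n.
Proof.
  intros HN Hn. assert (S n <= n); [|lia].
  eapply has_card_le; [|apply (has_card_seq N)|exact Hn].
  intros k [Hk _]. apply (Titer_fresh_columns _ _ _ HA_fresh t N); [lia|exact Hk|exact HN].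
Qed.

Lemma Titer_in_closure t x : Titer Y1 t A x -> C x.
Proof.
  revert x. induction t as [|t IH]; intros x Hx; [exists 0; left; exact Hx|].
  destruct Hx as [Hx|[_ Hcount]]; [auto|].
  apply NNPP. intros HnC.
  destruct (span_closure_closed _ _ _ HY2_bounded _ HnC) as (r' & c' & Hr' & Hc' & Hrc').
  destruct (has_card_sub _ _ _ (fun k => IH (k, snd x)) Hr') as (r & Hr & Hrr').
  destruct (has_card_sub _ _ _ (fun k => IH (fst x, k)) Hc') as (c & Hc & Hcc').
  assert (Hrc : Y2 (r, c)) by (eapply HY2_down; eassumption).
  assert (a <= r) by (apply (Hnew_in_row _ _ Hrc); intros H; apply Hcount; exists r, c; auto).
  pose proof (Hrow_le _ _ Hrc').
  assert (r = a) as -> by lia. assert (r' = a) as -> by lia.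
  assert (HN : Titer Y1 t A (N, snd x)).
  { apply (has_card_incl_eq _ _ _ (fun k => IH (k, snd x)) Hr Hr').
    apply fresh_column_in_closure, Hr'. }
  exact (Titer_fresh_row_infinite _ _ _ HN Hr).
Qed.

Lemma spans_add_fresh_column : spans Y1 A -> spans Y2 (fun x => A x \/ column_segment N m x).
Proof. intros Hspan x. destruct (Hspan x) as [t Ht]. exact (Titer_in_closure t x Ht). Qed.

End FreshColumn.

Definition column_list (N m : nat) : list pt := map (fun k => (N, k)) (seq N m).

Lemma in_column_list N m x : In x (column_list N m) <-> column_segment N m x.
Proof.
  unfold column_list, column_segment. rewrite in_map_iff. split.
  - intros [k [<- Hk]]. apply in_seq in Hk. split; [reflexivity|exact Hk].
  - destruct x as [i j]. simpl. intros [-> Hj]. exists j. split; [reflexivity|apply in_seq, Hj].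
Qed.

Lemma NoDup_column_list N m : NoDup (column_list N m).
Proof.
  apply Injective_map_NoDup; [|apply seq_NoDup].
  intros k k' H. injection H as H. exact H.
Qed.

Lemma length_column_list N m : length (column_list N m) = m.
Proof. unfold column_list. rewrite length_map. apply length_seq. Qed.

Lemma thin_app_fresh_column (A : list pt) N m :
  (forall x, In x A -> fst x < N /\ snd x < N) -> thin (lset A) ->
  thin (lset (A ++ column_list N m)).
Proof.
  intros HA Hthin x Hx.
  assert (Hsplit : forall y, lset (A ++ column_list N m) y -> In y A \/ column_segment N m y).
  { intros y. unfold lset. rewrite in_app_iff, in_column_list. tauto. }
  apply Hsplit in Hx as [HxA|[HxN HxB]].
  - pose proof (HA x HxA).
    destruct (Hthin x HxA) as [Hrow|Hcol]; [left|right]; intros y Hy Hyx;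
      (apply Hsplit in Hy as [HyA|[HyN HyB]]; [auto|lia]).
  - left. intros y Hy Hyx. apply Hsplit in Hy as [HyA|[HyN _]].
    + apply HA in HyA. lia.
    + destruct x, y. simpl in *. congruence.
Qed.

Lemma spanning_add_fresh_column (Y1 Y2 : pset) K a m :
  down_closed Y2 -> bounded_by Y2 K -> (forall r c, Y2 (r, c) -> ~ Y1 (r, c) -> a <= r) ->
  (forall r c, Y2 (r, c) -> r <= a) -> (forall c, Y2 (a, c) -> c < m) ->
  forall A : list pt, NoDup A -> spans Y1 (lset A) ->
  exists A2 : list pt, NoDup A2 /\ incl A A2 /\ spans Y2 (lset A2) /\
    length A2 = length A + m /\ (thin (lset A) -> thin (lset A2)).
Proof.
  intros Hdown Hbound Hnew Hle Hrow A HA Hspan.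
  destruct (list_coord_bound A) as [N HN].
  exists (A ++ column_list N m). split; [|split; [|split; [|split]]].
  - apply NoDup_app; [exact HA|apply NoDup_column_list|].
    intros x HxA HxB. apply in_column_list in HxB. apply HN in HxA. destruct HxB. lia.
  - intros x Hx. apply in_or_app. left. exact Hx.
  - eapply spans_equiv; [intros y; reflexivity| |].
    2: { apply (spans_add_fresh_column Y1 Y2 (lset A) K a m N); try assumption.
         intros x Hx. apply HN, Hx. }
    intros x. unfold lset. rewrite in_app_iff, in_column_list. reflexivity.
  - rewrite length_app, length_column_list. reflexivity.
  - apply thin_app_fresh_column, HN.
Qed.

Definition spanning_lift (Y1 Y2 : pset) : Prop :=
  forall A : list pt, NoDup A -> spans Y1 (lset A) ->
  exists A2 : list pt, NoDup A2 /\ incl A A2 /\ spans Y2 (lset A2) /\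
    (exists k, card_is (setD Y2 Y1) k /\ length A2 = length A + k) /\
    (thin (lset A) -> thin (lset A2)).

Lemma spanning_lift_refl Y : spanning_lift Y Y.
Proof.
  intros A HA Hspan. exists A. split; [exact HA|split; [apply incl_refl|split; [exact Hspan|]]].
  split; [|tauto]. exists 0. split; [|lia].
  exists []. split; [constructor|split; [|reflexivity]]. intros x. unfold setD. simpl. tauto.
Qed.

Lemma spanning_lift_trans Y1 Y2 Y3 :
  (forall x, Y1 x -> Y2 x) -> (forall x, Y2 x -> Y3 x) ->
  spanning_lift Y1 Y2 -> spanning_lift Y2 Y3 -> spanning_lift Y1 Y3.
Proof.
  intros H12 H23 L12 L23 A HA Hspan.
  destruct (L12 A HA Hspan) as (A2 & HA2 & Hincl2 & Hspan2 & (k2 & Hk2 & Hlen2) & Hthin2).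
  destruct (L23 A2 HA2 Hspan2) as (A3 & HA3 & Hincl3 & Hspan3 & (k3 & Hk3 & Hlen3) & Hthin3).
  exists A3. split; [exact HA3|split; [eapply incl_tran; eassumption|split; [exact Hspan3|]]].
  split; [|tauto]. exists (k3 + k2). split; [|lia].
  eapply has_card_ext; [|apply (has_card_union _ _ _ _ (fun x Hx Hx' => proj2 Hx (proj1 Hx')) Hk3 Hk2)].
  intros x. unfold setD. split; [intros [[? ?]|[? ?]]; auto|].
  intros [H3 H1]. destruct (classic (Y2 x)); [right|left]; auto.
Qed.

Lemma spanning_lift_equiv Y1 Y2 Y1' Y2' :
  (forall x, Y1 x <-> Y1' x) -> (forall x, Y2 x <-> Y2' x) ->
  spanning_lift Y1 Y2 -> spanning_lift Y1' Y2'.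
Proof.
  intros H1 H2 L A HA Hspan.
  destruct (L A HA) as (A2 & HA2 & Hincl & Hspan2 & (k & Hk & Hlen) & Hthin).
  { eapply spans_equiv; [|intros y; reflexivity|exact Hspan]. intros y. symmetry. apply H1. }
  exists A2. split; [exact HA2|split; [exact Hincl|split; [|split; [|exact Hthin]]]].
  - eapply spans_equiv; [exact H2|intros y; reflexivity|exact Hspan2].
  - exists k. split; [|exact Hlen]. eapply has_card_ext; [|exact Hk].
    intros x. unfold setD. rewrite H1, H2. reflexivity.
Qed.

Lemma thin_equiv (A B : pset) : (forall x, A x <-> B x) -> thin A -> thin B.
Proof.
  intros HAB Hthin x Hx. apply HAB in Hx.
  destruct (Hthin x Hx) as [H|H]; [left|right]; intros y Hy; apply H, HAB, Hy.
Qed.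

Lemma thin_transp (l : list pt) : thin (lset l) -> thin (lset (map transp l)).
Proof.
  intros Hthin x Hx. unfold lset in *. apply in_map_transp in Hx.
  destruct (Hthin _ Hx) as [H|H]; [right|left]; intros y Hy Hyx;
    apply in_map_transp in Hy; apply transp_injective, H; [exact Hy| |exact Hy|];
    destruct x, y; exact Hyx.
Qed.

Lemma spans_transp Z (l : list pt) :
  spans (fun y => Z (transp y)) (lset l) -> spans Z (lset (map transp l)).
Proof.
  intros Hspan x. destruct (Hspan (transp x)) as [t Ht]. exists t.
  apply (Titer_transp (fun y => Z (transp y))) in Ht. rewrite transp_involutive in Ht.
  eapply Titer_equiv; [| |exact Ht]; intros y; unfold lset;
    rewrite ?in_map_transp, ?transp_involutive; reflexivity.
Qed.

Lemma spanning_lift_transp Y1 Y2 :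
  spanning_lift Y1 Y2 -> spanning_lift (fun y => Y1 (transp y)) (fun y => Y2 (transp y)).
Proof.
  intros L A HA Hspan.
  destruct (L (map transp A)) as (A2 & HA2 & Hincl & Hspan2 & (k & Hk & Hlen) & Hthin).
  { apply Injective_map_NoDup; [apply transp_injective|exact HA]. }
  { apply spans_transp, Hspan. }
  exists (map transp A2). split; [|split; [|split; [|split]]].
  - apply Injective_map_NoDup; [apply transp_injective|exact HA2].
  - intros x Hx. apply in_map_transp, Hincl, in_map_transp. rewrite transp_involutive. exact Hx.
  - apply spans_transp. eapply spans_equiv; [|intros y; reflexivity|exact Hspan2].
    intros y. rewrite transp_involutive. reflexivity.
  - exists k. rewrite length_map, Hlen, length_map. split; [|reflexivity].
    eapply has_card_ext; [|apply (has_card_image transp _ _ transp_injective Hk)].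
    intros x. unfold setD. split; [intros [y [Hy <-]]; rewrite transp_involutive; exact Hy|].
    intros Hx. exists (transp x). split; [exact Hx|apply transp_involutive].
  - intros Hthin_A. apply thin_transp, Hthin.
    eapply thin_equiv; [|apply thin_transp, Hthin_A].
    intros y. unfold lset. rewrite in_map_transp. reflexivity.
Qed.

Definition box (Z : pset) (p q : nat) : pset := setI Z (rect (Some p) (Some q)).

Lemma box_incl Z p q p' q' : p <= p' -> q <= q' -> forall x, box Z p q x -> box Z p' q' x.
Proof. intros Hp Hq x (Hx & Hxp & Hxq). simpl in *. split; [exact Hx|split; simpl; lia]. Qed.

(* The zeros gained are the [(p, c)] with [c < m], an initial segment since [Z] is down-closed. *)
Lemma spanning_lift_add_row Z K p q :
  down_closed Z -> bounded_by Z K -> spanning_lift (box Z p q) (box Z (S p) q).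
Proof.
  intros Hdown Hbound A HA Hspan.
  destruct (nat_down_closed_segment (fun c => Z (p, c) /\ c < q) K) as [m Hm].
  { intros c c' [Hc Hcq] Hc'. split; [eapply Hdown; eauto|lia]. }
  { intros c [Hc _]. apply (Hbound _ _ Hc). }
  destruct (spanning_add_fresh_column (box Z p q) (box Z (S p) q) K p m)
    with (A := A) as (A2 & HA2 & Hincl & Hspan2 & Hlen & Hthin);
    try assumption; unfold box, setI, rect; simpl.
  - intros r c r' c' (Hrc & Hr & Hc) Hr' Hc'. simpl in *. split; [eapply Hdown; eauto|lia].
  - intros r c (Hrc & _). apply (Hbound _ _ Hrc).
  - intros r c (Hrc & Hr & Hc) Hn. simpl in *. apply Nat.nlt_ge. intros Hrp. apply Hn. auto.
  - intros r c (_ & Hr & _). simpl in *. lia.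
  - intros c (Hc & _ & Hcq). apply Hm. auto.
  - exists A2. split; [exact HA2|split; [exact Hincl|split; [exact Hspan2|split; [|exact Hthin]]]].
    exists m. split; [|exact Hlen].
    eapply has_card_ext; [|apply (has_card_image (pair p) _ _ ltac:(intros c c' H; injection H; auto)
                                     (has_card_seq 0 m))].
    intros [i j]. unfold setD, box, setI, rect. simpl. split.
    + intros [c [[_ Hc] Hpc]]. injection Hpc as <- <-. apply Hm in Hc as [Hpc Hcq].
      split; [auto|intros (_ & Hp & _); lia].
    + intros ((Hij & Hi & Hj) & Hn). assert (i = p) as ->.
      { apply Nat.le_antisymm; [lia|]. apply Nat.nlt_ge. intros Hip. apply Hn. auto. }
      exists j. split; [|reflexivity]. assert (j < m) by (apply Hm; auto). lia.
Qed.

Lemma spanning_lift_add_column Z K p q :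
  down_closed Z -> bounded_by Z K -> spanning_lift (box Z p q) (box Z p (S q)).
Proof.
  intros Hdown Hbound.
  assert (Hdown_t : down_closed (fun y => Z (transp y))).
  { intros r c r' c' H Hr Hc. exact (Hdown _ _ _ _ H Hc Hr). }
  assert (Hbound_t : bounded_by (fun y => Z (transp y)) K).
  { intros r c H. apply Hbound in H. tauto. }
  eapply spanning_lift_equiv;
    [| |exact (spanning_lift_transp _ _ (spanning_lift_add_row _ K q p Hdown_t Hbound_t))];
    intros [i j]; unfold box, setI, rect; simpl; tauto.
Qed.

Lemma spanning_lift_grow Z K p q p' q' :
  down_closed Z -> bounded_by Z K -> p <= p' -> q <= q' ->
  spanning_lift (box Z p q) (box Z p' q').
Proof.
  intros Hdown Hbound Hp Hq.
  apply (spanning_lift_trans _ (box Z p' q)); try (apply box_incl; lia).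
  - induction Hp as [|p' Hp IH]; [apply spanning_lift_refl|].
    apply (spanning_lift_trans _ (box Z p' q)); try (apply box_incl; lia); [exact IH|].
    apply (spanning_lift_add_row _ K); assumption.
  - induction Hq as [|q' Hq IH]; [apply spanning_lift_refl|].
    apply (spanning_lift_trans _ (box Z p' q')); try (apply box_incl; lia); [exact IH|].
    apply (spanning_lift_add_column _ K); assumption.
Qed.

Definition ext_min (a : extpos) (K : nat) : nat :=
  match a with Some n => min n K | None => K end.

Lemma spanning_lift_rect Z a b :
  is_zero_set Z -> finite_set Z -> spanning_lift (setI Z (rect a b)) Z.
Proof.
  intros HZ Hfin. destruct (finite_set_bounded Z Hfin) as [K HK].
  apply (spanning_lift_equiv (box Z (ext_min a K) (ext_min b K)) (box Z K K)).
  - intros [i j]. pose proof (HK i j). unfold box, setI, rect, ext_min.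
    destruct a, b; simpl; intuition lia.
  - intros [i j]. pose proof (HK i j). unfold box, setI, rect. simpl. intuition.
  - apply (spanning_lift_grow Z K); [apply zero_set_down_closed, HZ|exact HK| |];
      unfold ext_min; [destruct a|destruct b]; lia.
Qed.

Lemma card_is_lset (l : list pt) : NoDup l -> card_is (lset l) (length l).
Proof. intros Hl. exists l. split; [exact Hl|split; reflexivity]. Qed.

Lemma gamma_le_of_lift Y1 Y2 k g1 g2 :
  spanning_lift Y1 Y2 -> card_is (setD Y2 Y1) k ->
  is_gamma Y1 g1 -> is_gamma Y2 g2 -> g2 - k <= g1.
Proof.
  intros L Hk [(A & (l & Hl & HlA & <-) & Hspan) _] [_ Hmin].
  destruct (L l Hl) as (A2 & HA2 & _ & Hspan2 & (k' & Hk' & Hlen) & _).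
  { eapply spans_equiv; [intros y; reflexivity| |exact Hspan]. intros y. symmetry. apply HlA. }
  rewrite (has_card_unique Hk' Hk) in Hlen.
  enough (g2 <= length A2) by lia.
  exact (Hmin _ _ (card_is_lset A2 HA2) Hspan2).
Qed.

Lemma gamma_thin_le_of_lift Y1 Y2 k g1 g2 :
  spanning_lift Y1 Y2 -> card_is (setD Y2 Y1) k ->
  is_gamma_thin Y1 g1 -> is_gamma_thin Y2 g2 -> g2 - k <= g1.
Proof.
  intros L Hk [(A & (l & Hl & HlA & <-) & Hthin & Hspan) _] [_ Hmin].
  assert (HlA' : forall y, A y <-> lset l y) by (intros y; symmetry; apply HlA).
  destruct (L l Hl) as (A2 & HA2 & _ & Hspan2 & (k' & Hk' & Hlen) & Hthin2).
  { eapply spans_equiv; [intros y; reflexivity|exact HlA'|exact Hspan]. }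
  rewrite (has_card_unique Hk' Hk) in Hlen.
  enough (g2 <= length A2) by lia.
  apply (Hmin _ _ (card_is_lset A2 HA2)); [|exact Hspan2].
  apply Hthin2, (thin_equiv A); assumption.
Qed.

Theorem mainTheorem8 (Z : pset) (a b : extpos) :
  is_zero_set Z -> finite_set Z -> valid_ext a -> valid_ext b ->
  (forall (A' : list pt), NoDup A' -> spans (setI Z (rect a b)) (lset A') ->
     exists A : list pt, NoDup A /\ incl A' A /\ spans Z (lset A) /\
       (exists k, card_is (setD Z (rect a b)) k /\ length A = length A' + k) /\
       (thin (lset A') -> thin (lset A))) /\
  (forall k g1 g2, card_is (setD Z (rect a b)) k ->
     is_gamma (setI Z (rect a b)) g1 -> is_gamma Z g2 -> g2 - k <= g1) /\
  (forall k g1 g2, card_is (setD Z (rect a b)) k ->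
     is_gamma_thin (setI Z (rect a b)) g1 -> is_gamma_thin Z g2 -> g2 - k <= g1).
Proof.
  intros HZ Hfin _ _.
  pose proof (spanning_lift_rect Z a b HZ Hfin) as L.
  assert (Hdiff : forall x, setD Z (rect a b) x <-> setD Z (setI Z (rect a b)) x).
  { intros x. unfold setD, setI. tauto. }
  split; [|split].
  - intros A' HA' Hspan.
    destruct (L A' HA' Hspan) as (A & HA & Hincl & HspanA & (k & Hk & Hlen) & Hthin).
    exists A. split; [exact HA|split; [exact Hincl|split; [exact HspanA|split; [|exact Hthin]]]].
    exists k. split; [|exact Hlen].
    exact (has_card_ext _ _ _ (fun x => iff_sym (Hdiff x)) Hk).
  - intros k g1 g2 Hk. exact (gamma_le_of_lift _ _ k g1 g2 L (has_card_ext _ _ _ Hdiff Hk)).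
  - intros k g1 g2 Hk. exact (gamma_thin_le_of_lift _ _ k g1 g2 L (has_card_ext _ _ _ Hdiff Hk)).
Qed.
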